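(* Let $\mathscr{H}_3$ be the class of graphs $G$ on at least twelve vertices with $\gamma(G)=2$ and $\operatorname{diam}(\overline{G})\ge 3$. Then $\mathscr{H}_3$ is recognizable: every graph $H$ with $\mathscr{D}(H)=\mathscr{D}(G)$ for some $G\in\mathscr{H}_3$ belongs to $\mathscr{H}_3$.
   Context: All graphs are finite, simple and undirected; $\overline{G}$ is the complement, $\operatorname{diam}$ the diameter (infinite for disconnected graphs) and $\gamma$ the domination number. For a vertex $v$, the card $G-v$ is the unlabeled graph obtained by deleting $v$; the deck $\mathscr{D}(G)$ is the multiset of all cards up to isomorphism. A class of graphs is recognizable if every reconstruction (graph with the same deck) of a member of the class is again a member. *)

From mathcomp Require Import all_boot all_fingroup.
Set Implicit Arguments. Unset Strict Implicit. Unset Printing Implicit Defensive.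

Definition simple_graph (n : nat) (g : rel 'I_n) : Prop :=
  symmetric g /\ irreflexive g.

Definition compl_graph (n : nat) (g : rel 'I_n) : rel 'I_n :=
  fun i j => (i != j) && ~~ g i j.

Definition card_del (n : nat) (g : rel 'I_n.+1) (v : 'I_n.+1) : rel 'I_n :=
  fun i j => g (lift v i) (lift v j).

Definition graph_iso (m : nat) (g h : rel 'I_m) : Prop :=
  exists f : {perm 'I_m}, forall i j, g i j = h (f i) (f j).

(* Equal decks: the multisets of cards up to isomorphism coincide, i.e. there is
   a bijection of the vertices matching each card of g with an isomorphic card of h. *)
Definition same_deck (n : nat) (g h : rel 'I_n.+1) : Prop :=
  exists s : {perm 'I_n.+1}, forall v, graph_iso (card_del g v) (card_del h (s v)).

Definition dominating (n : nat) (g : rel 'I_n) (D : {set 'I_n}) : Prop :=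
  forall v, v \in D \/ exists2 u, u \in D & g u v.

Definition domination_number_is (n : nat) (g : rel 'I_n) (k : nat) : Prop :=
  (exists D : {set 'I_n}, dominating g D /\ #|D| = k) /\
  (forall D : {set 'I_n}, dominating g D -> k <= #|D|).

(* diam(g) >= d (diameter infinite for disconnected graphs): some pair u, v such
   that every walk from u to v has length at least d (vacuous if none exists). *)
Definition diam_ge (n : nat) (g : rel 'I_n) (d : nat) : Prop :=
  exists u v : 'I_n, forall p : seq 'I_n, path g u p -> last u p = v -> d <= size p.

Definition in_H3 (n : nat) (g : rel 'I_n.+1) : Prop :=
  12 <= n.+1 /\ domination_number_is g 2 /\ diam_ge (compl_graph g) 3.

From Stdlib Require Import ZArith.
From mathcomp Require Import all_boot all_fingroup zify.
Set Implicit Arguments. Unset Strict Implicit. Unset Printing Implicit Defensive.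

(* For a simple graph, diam(complement G) >= 3 means exactly that some edge xy
   dominates G, and in the presence of such an edge gamma(G) = 2 means that no
   single vertex dominates G.  Let D_k count the ordered edges (resp. the
   vertices) whose closed neighbourhood misses exactly k vertices.  Counting
   over the deck as in Kelly's lemma gives
     sum_w D_k(G - w) = (k+1) D_(k+1)(G) + (N - c - k) D_k(G)
   with c = 2 for edges and c = 1 for vertices, so the differences
   d_k = D_k(G) - D_k(H) of two hypomorphic graphs satisfy
   (k+1) d_(k+1) = -(N - c - k) d_k, whence 4! d_4 = (N - c)^_4 d_0.
   Since |d_4| <= N^2 < (N - c)^_4 / 4! once N >= 12, d_0 = 0: H has a
   dominating edge and no dominating vertex exactly when G has. *)

Definition common_nonnbrs m (g : rel 'I_m) (x y : 'I_m) : {set 'I_m} :=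
  [set z | [&& z != x, z != y, ~~ g x z & ~~ g y z]].

Lemma common_nonnbrs_eq0P m (g : rel 'I_m) x y :
  reflect (forall z, [|| z == x, z == y, g x z | g y z]) (common_nonnbrs g x y == set0).
Proof.
apply: (iffP eqP) => [cnn0 z | dom].
  by move/setP/(_ z): cnn0; rewrite !inE => /negbT; rewrite !negb_and !negbK.
by apply/setP => z; rewrite !inE -!negb_or dom.
Qed.

Lemma dominating_pairP m (g : rel 'I_m) x y :
  dominating g [set x; y] <-> common_nonnbrs g x y = set0.
Proof.
split=> [dom | /eqP/common_nonnbrs_eq0P dom z].
  apply/eqP/common_nonnbrs_eq0P => z; case: (dom z) => [| [u]]; rewrite !inE.
    by case/orP=> ->; rewrite ?orbT.
  by case/orP=> /eqP-> ->; rewrite ?orbT.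
case/or4P: (dom z) => [zx | zy | gxz | gyz].
- by left; rewrite !inE zx.
- by left; rewrite !inE zy orbT.
- by right; exists x; rewrite ?inE ?eqxx.
by right; exists y; rewrite ?inE ?eqxx ?orbT.
Qed.

Lemma domination_number2P n (g : rel 'I_n.+1) :
  domination_number_is g 2 <->
  (exists x y, x != y /\ common_nonnbrs g x y = set0) /\
  (forall x, common_nonnbrs g x x != set0).
Proof.
split=> [[[D [domD /eqP/cards2P[x [y [xy DE]]]]] min2] | [[x [y [xy cnn0]]] nodom1]].
  split; first by exists x, y; split=> //; apply/dominating_pairP; rewrite -DE.
  by move=> z; apply/eqP => /dominating_pairP; rewrite setUid => /min2; rewrite cards1.
split=> [|D domD].
  by exists [set x; y]; rewrite cards2 xy; split=> //; apply/dominating_pairP.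
have [D0 | [z zD]] := set_0Vmem D; first by case: (domD ord0) => [|[u]]; rewrite D0 inE.
rewrite leqNgt ltnS; apply/negP => D1.
have /cards1P[u Du] : #|D| == 1 by rewrite eqn_leq D1 card_gt0; apply/set0Pn; exists z.
by move: domD; rewrite Du -[[set u]]setUid => /dominating_pairP /eqP; apply/negP.
Qed.

Lemma diam_ge3_complP m (g : rel 'I_m) : simple_graph g ->
  diam_ge (compl_graph g) 3 <-> exists x y, g x y /\ common_nonnbrs g x y = set0.
Proof.
case=> gsym girr; split=> [[x [y far]] | [x [y [gxy /eqP/common_nonnbrs_eq0P dom]]]].
  have xy : x != y by apply/eqP => xy; have := far [::] isT xy.
  have gxy : g x y.
    apply/negPn/negP => ngxy; have := far [:: y].
    by rewrite /= /compl_graph xy ngxy => /(_ isT erefl).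
  exists x, y; split=> //; apply/setP => z; rewrite !inE; apply/negbTE/and4P => -[zx zy gxz gyz].
  have := far [:: z; y]; rewrite /= /compl_graph eq_sym zx gxz zy gsym gyz.
  by move=> /(_ isT erefl).
have xy : x != y by apply: contraTneq gxy => ->; rewrite girr.
exists x, y => -[|a [|b [|c p]]] //=; rewrite /compl_graph.
- by move=> _ yx; rewrite yx eqxx in xy.
- by move=> + ay; rewrite ay gxy andbF.
move=> /and3P[/andP[xa gxa] /andP[ay gay] _] byE; subst b.
case/or4P: (dom a) => [/eqP ax | /eqP ay' | gxa' | gya].
- by rewrite ax eqxx in xa.
- by rewrite ay' eqxx in ay.
- by rewrite gxa' in gxa.
by rewrite gsym gya in gay.
Qed.

(* [pair_count g g 0] counts the ordered dominating edges of [g], and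
   [pair_count eq_op g 0] its dominating vertices, as diagonal pairs. *)
Definition pair_count m (r g : rel 'I_m) (k : nat) : nat :=
  #|[set p | r p.1 p.2 && (#|common_nonnbrs g p.1 p.2| == k)]|.

Lemma pair_count0_gt0P m (r g : rel 'I_m) :
  reflect (exists x y, r x y /\ common_nonnbrs g x y = set0) (0 < pair_count r g 0).
Proof.
apply: (iffP card_gt0P) => [[[x y]] | [x [y [rxy cnn0]]]].
  by rewrite inE cards_eq0 => /andP[rxy /eqP cnn0]; exists x, y.
by exists (x, y); rewrite inE cards_eq0 rxy cnn0 /=.
Qed.

Lemma in_H3P n (g : rel 'I_n.+1) : simple_graph g ->
  in_H3 g <-> [/\ 11 <= n, 0 < pair_count g g 0 & pair_count eq_op g 0 = 0].
Proof.
move=> simple_g; have irr := proj2 simple_g.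
split=> [[n11 [/domination_number2P[_ nodom1] /(diam_ge3_complP simple_g) edge]] | ].
  split=> //; first exact/pair_count0_gt0P.
  apply/eqP; rewrite -leqn0 leqNgt; apply/pair_count0_gt0P => -[x [_ [/eqP<- cnn0]]].
  by move/eqP: (nodom1 x).
case=> n11 /pair_count0_gt0P[x [y [gxy cnn0]]] /eqP.
rewrite -leqn0 leqNgt => /pair_count0_gt0P nodom.
split=> //; split; last by apply/(diam_ge3_complP simple_g); exists x, y.
apply/domination_number2P; split.
  by exists x, y; split=> //; apply: contraTneq gxy => ->; rewrite irr.
by move=> z; apply/eqP => cnn0'; apply: nodom; exists z, z.
Qed.

Lemma pair_count_le m (r g : rel 'I_m) k : pair_count r g k <= m * m.
Proof. by rewrite -[m in m * m]card_ord -card_prod max_card. Qed.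

Lemma common_nonnbrs_perm m (g h : rel 'I_m) (f : {perm 'I_m}) x y :
  (forall i j, g i j = h (f i) (f j)) ->
  f @^-1: common_nonnbrs h (f x) (f y) = common_nonnbrs g x y.
Proof. by move=> gh; apply/setP => z; rewrite !inE !gh !(inj_eq perm_inj). Qed.

Lemma pair_count_perm m (r s g h : rel 'I_m) (f : {perm 'I_m}) k :
    (forall i j, r i j = s (f i) (f j)) -> (forall i j, g i j = h (f i) (f j)) ->
  pair_count r g k = pair_count s h k.
Proof.
move=> rs gh; pose fp (p : 'I_m * 'I_m) := (f p.1, f p.2).
have fp_inj : injective fp by move=> [? ?] [? ?] [/perm_inj-> /perm_inj->].
rewrite /pair_count -[RHS](card_preimset _ fp_inj); apply: eq_card => -[x y].
by rewrite !inE /= rs -(common_nonnbrs_perm x y gh) (card_preimset _ perm_inj).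
Qed.

Lemma common_nonnbrs_card_del n (g : rel 'I_n.+1) w x y :
  lift w @: common_nonnbrs (card_del g w) x y =
  common_nonnbrs g (lift w x) (lift w y) :\ w.
Proof.
apply/setP => z; rewrite !inE; case: (unliftP w z) => [z'|] ->.
  by rewrite (mem_imset _ _ lift_inj) !inE !(inj_eq lift_inj) (eq_sym (lift w z')) neq_lift.
rewrite eqxx /=; apply/negbTE/imsetP => -[z' _ wE].
by move: (neq_lift w z'); rewrite -wE eqxx.
Qed.

Lemma pair_count_card_del n (r g : rel 'I_n.+1) w k :
  pair_count (card_del r w) (card_del g w) k =
  #|[set p | [&& r p.1 p.2, w \notin [set p.1; p.2]
              & #|common_nonnbrs g p.1 p.2 :\ w| == k]]|.
Proof.
pose lp (p : 'I_n * 'I_n) := (lift w p.1, lift w p.2).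
have lp_inj : injective lp.
  move=> [a b] [c d] /eqP; rewrite /lp /= xpair_eqE !(inj_eq lift_inj).
  by case/andP=> /eqP-> /eqP->.
rewrite /pair_count -(card_imset _ lp_inj); apply: eq_card => -[x y].
rewrite [in RHS]inE /=; case: (boolP (w \in [set x; y])) => [wxy | /=]; last first.
  rewrite !inE !negb_or => /andP[/unlift_some[x' -> _] /unlift_some[y' -> _]].
  rewrite -[(lift w _, _)]/(lp (x', y')) (mem_imset _ _ lp_inj) inE.
  by rewrite -common_nonnbrs_card_del (card_imset _ (@lift_inj _ w)).
rewrite andbF; apply/negbTE/imsetP => -[[x' y'] _ [xE yE]].
by move: wxy; rewrite xE yE !inE (negbTE (neq_lift w x')) (negbTE (neq_lift w y')).
Qed.

Lemma card_set_sum (T : finType) (P : pred T) :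
  #|[set x | P x]| = \sum_x P x.
Proof. by rewrite -sum1dep_card big_mkcond; apply: eq_bigr => x _; case: (P x). Qed.

Lemma card_notin_setD1_eq N (A S : {set 'I_N}) k : [disjoint A & S] ->
  #|[set w | (w \notin S) && (#|A :\ w| == k)]| =
  (#|A| == k.+1) * k.+1 + (#|A| == k) * (N - #|S| - k).
Proof.
move=> AS; have cardAD1 w : #|A :\ w| = if w \in A then #|A|.-1 else #|A|.
  by rewrite (cardsD1 w A); case: (w \in A).
have [Ak1 | Ak1] := eqVneq #|A| k.+1.
  rewrite Ak1 (gtn_eqF (ltnSn k)) mul1n addn0 -Ak1; apply: eq_card => w.
  rewrite inE cardAD1 Ak1; case: (boolP (w \in A)) => [wA | _].
    by rewrite eqxx andbT (disjointFr AS wA).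
  by rewrite (gtn_eqF (ltnSn k)) andbF.
have [Ak | Ak] := eqVneq #|A| k.
  have -> : [set w | (w \notin S) && (#|A :\ w| == k)] = ~: (A :|: S).
    apply/setP => w; rewrite !inE negb_or cardAD1 Ak.
    case: (boolP (w \in A)) => [wA | _]; last by rewrite eqxx andbT.
    suff /ltn_eqF-> : k.-1 < k by rewrite andbF.
    by rewrite -Ak ltn_predL; apply/card_gt0P; exists w.
  rewrite mul1n add0n cardsCs setCK cardsU (disjoint_setI0 AS) cards0 subn0 card_ord Ak.
  by rewrite -subnDA addnC subnDA.
rewrite add0n mul0n; apply/eqP; rewrite cards_eq0; apply/eqP/setP => w.
rewrite !inE cardAD1; case: ifP => [wA | _]; last by rewrite (negbTE Ak) andbF.
apply/negbTE; apply: contra Ak1 => /andP[_ /eqP <-].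
by rewrite prednK //; apply/card_gt0P; exists w.
Qed.

Lemma sum_pair_count_card_del n (r g : rel 'I_n.+1) c k :
    (forall x y, r x y -> #|[set x; y]| = c) ->
  \sum_w pair_count (card_del r w) (card_del g w) k =
  k.+1 * pair_count r g k.+1 + (n.+1 - c - k) * pair_count r g k.
Proof.
move=> card_r; under eq_bigr do rewrite pair_count_card_del card_set_sum.
rewrite exchange_big /pair_count !card_set_sum !big_distrr -big_split /=.
apply: eq_bigr => -[x y] _ /=; have [rxy | _] /= := boolP (r x y); last by rewrite !muln0 big1.
have disj : [disjoint common_nonnbrs g x y & [set x; y]].
  apply/pred0P => z; rewrite !inE.
  by case: eqP => [->|_]; case: eqP => [->|_]; rewrite ?eqxx ?andbF.
rewrite -card_set_sum -(card_r _ _ rxy) mulnC [_ * (_ == k)]mulnC -(card_notin_setD1_eq _ disj).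
by apply: eq_card => w; rewrite !inE.
Qed.

Lemma recurrence_closed_form (M K : nat) (x : nat -> Z) :
    (forall k, k < K -> (Z.of_nat k.+1 * x k.+1 = - Z.of_nat (M - k) * x k)%Z) ->
  forall k : nat, k <= K ->
  (Z.of_nat k`! * x k = (-1) ^ Z.of_nat k * Z.of_nat (M ^_ k) * x 0%N)%Z.
Proof.
move=> step; elim=> [_ | k IH ltkK]; first by rewrite /=.
rewrite factS ffactnSr !Nat2Z.inj_mul Nat2Z.inj_succ Z.pow_succ_r; last exact: Zle_0_nat.
have := step k ltkK; have := IH (ltnW ltkK); rewrite Nat2Z.inj_succ.
set f := Z.of_nat k`!; set s := ((-1) ^ _)%Z; set p := Z.of_nat (M ^_ k).
set d := Z.of_nat (M - k); set i := Z.of_nat k; clearbody f s p d i.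
move=> IHk stepk; rewrite (Z.mul_comm _ f) -Z.mul_assoc stepk.
by transitivity (- d * (f * x k))%Z; [ring | rewrite IHk; ring].
Qed.

Lemma eq_at0_of_recurrence (M K B : nat) (a b : nat -> nat) :
    K`! * B < M ^_ K ->
    (forall k, k < K ->
       k.+1 * a k.+1 + (M - k) * a k = k.+1 * b k.+1 + (M - k) * b k) ->
  a K <= B -> b K <= B -> a 0 = b 0.
Proof.
move=> bigM rec aK bK; pose x k := (Z.of_nat (a k) - Z.of_nat (b k))%Z.
have step k : k < K -> (Z.of_nat k.+1 * x k.+1 = - Z.of_nat (M - k) * x k)%Z.
  by move=> /rec; rewrite /x; lia.
have xK : (Z.abs (x K) <= Z.of_nat B)%Z by rewrite /x; lia.
have := recurrence_closed_form step (leqnn K) => /(f_equal Z.abs).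
rewrite !Z.abs_mul Z.abs_pow Z.pow_1_l ?Z.mul_1_l; last by lia.
have ltP : (Z.of_nat K`! * Z.of_nat B < Z.of_nat (M ^_ K))%Z by lia.
set F := Z.of_nat K`!; set P := Z.of_nat (M ^_ K).
have F0 : (0 <= F)%Z by apply: Zle_0_nat.
have P0 : (0 < P)%Z.
  by apply: (Z.le_lt_trans _ _ _ _ ltP); apply: Z.mul_nonneg_nonneg; lia.
rewrite (Z.abs_eq F) // (Z.abs_eq P); last by lia.
move=> E; have : (Z.abs (x 0%N) < 1)%Z.
  apply/(Z.mul_lt_mono_pos_l _ _ _ P0); rewrite -E Z.mul_1_r.
  by apply: (Z.le_lt_trans _ _ _ _ ltP); apply: Z.mul_le_mono_nonneg_l.
by rewrite /x; lia.
Qed.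

Lemma fact4_sq_lt_ffact4 M : 9 <= M -> 4`! * (M.+2 * M.+2) < M ^_ 4.
Proof.
case: M => [|[|[|[|[|[|[|[|[|j]]]]]]]]] // _.
by rewrite !ffactSS ffactn0 -[4`!]/24; nia.
Qed.

Definition pair_rel (edges : bool) m (g : rel 'I_m) : rel 'I_m :=
  if edges then g else eq_op.

Lemma card_pair_rel m (g : rel 'I_m) edges x y : irreflexive g ->
  pair_rel edges g x y -> #|[set x; y]| = edges.+1.
Proof.
move=> irr; case: edges => /= [gxy | /eqP->]; last by rewrite setUid cards1.
by rewrite cards2; case: eqP gxy => [-> | _]; rewrite ?irr.
Qed.

Lemma same_deck_sum_pair_count n (G H : rel 'I_n.+1) edges k : same_deck G H ->
  \sum_w pair_count (card_del (pair_rel edges G) w) (card_del G w) k =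
  \sum_w pair_count (card_del (pair_rel edges H) w) (card_del H w) k.
Proof.
case=> s iso_s; rewrite [RHS](reindex_inj (@perm_inj _ s)).
apply: eq_bigr => v _; have [f fGH] := iso_s v.
apply: (pair_count_perm (f := f)) => // i j; case: edges => //=.
by rewrite /card_del !(inj_eq lift_inj) (inj_eq perm_inj).
Qed.

Lemma same_deck_pair_count0 n (G H : rel 'I_n.+1) edges :
    11 <= n -> irreflexive G -> irreflexive H -> same_deck G H ->
  pair_count (pair_rel edges G) G 0 = pair_count (pair_rel edges H) H 0.
Proof.
move=> n11 irrG irrH deckGH.
apply: (@eq_at0_of_recurrence (n.+1 - edges.+1) 4 (n.+1 * n.+1)); rewrite ?pair_count_le //.
  rewrite subSS; apply: leq_ltn_trans (fact4_sq_lt_ffact4 _); last by case: edges; lia.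
  by rewrite leq_mul2l leq_mul; case: edges; rewrite ?subn0 ?subn1 //=; lia.
move=> k _; rewrite -(sum_pair_count_card_del _ _ (fun x y => card_pair_rel irrG)).
rewrite -(sum_pair_count_card_del _ _ (fun x y => card_pair_rel irrH)).
exact: same_deck_sum_pair_count.
Qed.

Theorem lemma11 (n : nat) (G H : rel 'I_n.+1) :
  simple_graph G -> simple_graph H -> same_deck G H -> in_H3 G -> in_H3 H.
Proof.
move=> simG simH deckGH /(in_H3P simG)[n11 edgeG vertexG].
have [[_ irrG] [_ irrH]] := (simG, simH).
apply/(in_H3P simH); split=> //.
  by rewrite -(same_deck_pair_count0 true n11 irrG irrH deckGH).
by rewrite -(same_deck_pair_count0 false n11 irrG irrH deckGH).
Qed.
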